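(* Let $w_1,w_2\ge2$ be even. The map $\psi:V_{w_1,w_2}^{\mathbb Q}[I_D]\to W_{w_1+w_2}^{\mathbb Q}$, $P(X_1,X_2)\mapsto P(Z,Z)$, is well defined and surjective, and it admits a rational section: if $P(Z)=\sum_{m=0}^{w_1+w_2}\binom{w_1+w_2}{m}a_m(-Z)^{w_1+w_2-m}\in W_{w_1+w_2}^{\mathbb Q}$, then $Q(X_1,X_2)=\sum_{m_1=0}^{w_1}\sum_{m_2=0}^{w_2}\binom{w_1}{m_1}\binom{w_2}{m_2}a_{m_1+m_2}(-X_1)^{w_1-m_1}(-X_2)^{w_2-m_2}$ lies in $V_{w_1,w_2}^{\mathbb Q}[I_D]$ and satisfies $Q(Z,Z)=P(Z)$.
   Context: $\Gamma=PSL_2(\mathbb Z)$, $S=\pm\begin{pmatrix}0&-1\\1&0\end{pmatrix}$, $U=\pm\begin{pmatrix}0&1\\-1&1\end{pmatrix}$. For even $w$, $V_w^{\mathbb Q}$ is the space of rational polynomials of degree $\le w$ with action $\gamma.P(X)=(-cX+a)^wP\big(\frac{dX-b}{-cX+a}\big)$ for $\gamma=\pm\begin{pmatrix}a&b\\c&d\end{pmatrix}$; $W_w^{\mathbb Q}=\{P\in V_w^{\mathbb Q}:(1+S).P=(1+U+U^2).P=0\}$. $V_{w_1,w_2}^{\mathbb Q}$ is the space of rational polynomials in $X_1,X_2$ with $\deg_{X_j}\le w_j$, with action $(\gamma_1,\gamma_2).P(X_1,X_2)=(-c_1X_1+a_1)^{w_1}(-c_2X_2+a_2)^{w_2}P\big(\frac{d_1X_1-b_1}{-c_1X_1+a_1},\frac{d_2X_2-b_2}{-c_2X_2+a_2}\big)$,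 extended linearly to $\mathbb Z[\Gamma^2]$; $V_{w_1,w_2}^{\mathbb Q}[I_D]=\{P\in V_{w_1,w_2}^{\mathbb Q}:[(1,1)+(S,S)].P=[(1,1)+(U,U)+(U^2,U^2)].P=0\}$. *)

From HB Require Import structures.
From mathcomp Require Import all_boot all_order all_algebra.
Set Implicit Arguments. Unset Strict Implicit. Unset Printing Implicit Defensive.
Import Order.TTheory GRing.Theory Num.Theory.
Local Open Scope ring_scope.

(* Elements of PSL_2(Z) are represented by integer 2x2 matrices
   g = [[a, b], [c, d]] (the sign ambiguity is irrelevant: w is even). *)
Definition mS : 'M[int]_2 := \matrix_(i < 2, j < 2)
  (if (i == 0) && (j == 1) then -1 else if (i == 1) && (j == 0) then 1 else 0).
Definition mU : 'M[int]_2 := \matrix_(i < 2, j < 2)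
  (if (i == 0) && (j == 1) then 1 else if (i == 1) && (j == 0) then -1
   else if (i == 1) && (j == 1) then 1 else 0).
Definition mU2 : 'M[int]_2 := mU *m mU.

Definition ga (g : 'M[int]_2) : int := g 0 0.
Definition gb (g : 'M[int]_2) : int := g 0 1.
Definition gc (g : 'M[int]_2) : int := g 1 0.
Definition gd (g : 'M[int]_2) : int := g 1 1.

(* (-cX+a)^w * ((dX-b)/(-cX+a))^i = (dX - b)^i (-cX + a)^(w-i), in R[X] *)
Definition mono {R : comNzRingType} (g : 'M[int]_2) (w i : nat) : {poly R} :=
  ((gd g)%:~R *: 'X - ((gb g)%:~R)%:P) ^+ i *
  (- ((gc g)%:~R *: 'X) + ((ga g)%:~R)%:P) ^+ (w - i).

Definition act {R : comNzRingType} (w : nat) (g : 'M[int]_2) (p : {poly R}) : {poly R} :=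
  \sum_(i < w.+1) p`_i *: mono g w i.

Definition inV (w : nat) (p : {poly rat}) : bool := (size p <= w.+1)%N.

Definition inW (w : nat) (p : {poly rat}) : Prop :=
  inV w p /\ p + act w mS p = 0 /\ p + act w mU p + act w mU2 p = 0.

(* Bivariate polynomials P(X1,X2) are {poly {poly rat}}: outer variable X1,
   inner variable X2. *)
Definition inV2 (w1 w2 : nat) (P : {poly {poly rat}}) : bool :=
  (size P <= w1.+1)%N && [forall i : 'I_w1.+1, (size (P`_i)%R <= w2.+1)%N].

Definition act2 (w1 w2 : nat) (g1 g2 : 'M[int]_2) (P : {poly {poly rat}})
  : {poly {poly rat}} :=
  \sum_(i < w1.+1) act w2 g2 P`_i *: mono g1 w1 i.

Definition inVID (w1 w2 : nat) (P : {poly {poly rat}}) : Prop :=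
  inV2 w1 w2 P /\ P + act2 w1 w2 mS mS P = 0 /\
  P + act2 w1 w2 mU mU P + act2 w1 w2 mU2 mU2 P = 0.

Definition diag (P : {poly {poly rat}}) : {poly rat} := P.['X].

Definition section (w1 w2 : nat) (a : nat -> rat) : {poly {poly rat}} :=
  \sum_(m1 < w1.+1) \sum_(m2 < w2.+1)
    ((((('C(w1, m1) * 'C(w2, m2))%:R * a (m1 + m2)%N) : rat)%:P)%:P *
      ((- 'X) ^+ (w1 - m1) * ((- 'X : {poly rat}) ^+ (w2 - m2))%:P)).

From HB Require Import structures.
From mathcomp Require Import all_boot all_order all_algebra.
From mathcomp Require Import ring zify.
Set Implicit Arguments. Unset Strict Implicit. Unset Printing Implicit Defensive.
Import Order.TTheory GRing.Theory Num.Theory.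
Local Open Scope ring_scope.

(* Work over R = Q[Y] and consider the generating polynomials (u - vX)^w and
   (u - vX1)^w1 (u - vX2)^w2 with u, v in R.  The weight-w action of g sends
   (u - vX)^w to (u' - v'X)^w with (u', v') = g (u, v), and likewise for the
   product.  The umbral functional L : Y^m |-> a_m maps (Y - X)^w to p and
   (Y - X1)^w1 (Y - X2)^w2 to the section Q.  The coefficient of X1^k1 X2^k2
   in the product is C(w1,k1) C(w2,k2) / C(w,k1+k2) times the coefficient of
   X^(k1+k2) in the full power, for every (u, v); hence applying L to any
   linear relation among the actions on (Y - X)^w gives the same relation for
   Q, and the cocycle relations for p transfer to Q.  The converse direction
   is a direct computation: restricting to the diagonal commutes with the
   action. *)

Section Action.
Variable R : comNzRingType.

Lemma act_is_linear w g : linear (@act R w g).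
Proof.
move=> c p q; rewrite /act scaler_sumr -big_split /=; apply: eq_bigr => i _.
by rewrite coefD coefZ scalerDl scalerA.
Qed.
HB.instance Definition _ w g :=
  GRing.isLinear.Build R {poly R} {poly R} *:%R (@act R w g) (act_is_linear w g).

Lemma map_mono (S : comNzRingType) (f : {rmorphism R -> S}) g w i :
  map_poly f (mono g w i) = mono g w i.
Proof.
by rewrite /mono rmorphM !rmorphXn !rmorphD !rmorphN /= !map_polyZ map_polyX !rmorph_int.
Qed.

Lemma map_act (S : comNzRingType) (f : {rmorphism R -> S}) g w p :
  map_poly f (act w g p) = act w g (map_poly f p).
Proof.
rewrite /act rmorph_sum; apply: eq_bigr => i _ /=.
by rewrite map_polyZ map_mono coef_map.
Qed.

Lemma act_Xn w g k : (k <= w)%N -> act w g 'X^k = mono g w k :> {poly R}.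
Proof.
move=> kw; rewrite /act (bigD1 (Ordinal (kw : k < w.+1)%N)) //= coefXn eqxx scale1r.
rewrite big1 ?addr0 // => i /negbTE; rewrite coefXn.
by rewrite -val_eqE /= => ->; rewrite scale0r.
Qed.

Lemma horner_polyC_X (q : {poly R}) : (map_poly polyC q).['X] = q.
Proof. exact: comp_polyXr. Qed.

Definition act2_ring w1 w2 (g1 g2 : 'M[int]_2) (P : {poly {poly R}})
  : {poly {poly R}} := \sum_(i < w1.+1) act w2 g2 P`_i *: mono g1 w1 i.

Lemma act2_ring_split w1 w2 g (Q H : {poly R}) :
  act2_ring w1 w2 g g (map_poly polyC Q * H%:P) =
  map_poly polyC (act w1 g Q) * (act w2 g H)%:P.
Proof.
rewrite map_act /act2_ring [act w1 g _]/act mulr_suml; apply: eq_bigr => i _.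
rewrite coefMC coef_map /= mul_polyC linearZ /=.
by rewrite -!mul_polyC polyCM mulrAC.
Qed.

Definition linpow n (u v : R) : {poly R} := (u%:P - v *: 'X) ^+ n.

Lemma coef_linpow n (u v : R) k :
  (linpow n u v)`_k =
  if (k <= n)%N then (u ^+ (n - k) * (- v) ^+ k) *+ 'C(n, k) else 0.
Proof.
have -> : linpow n u v = \poly_(i < n.+1) ((u ^+ (n - i) * (- v) ^+ i) *+ 'C(n, i)).
  rewrite poly_def /linpow exprDn; apply: eq_bigr => i _.
  by rewrite -scaleNr exprZn -rmorphXn /= mul_polyC scalerA scalerMnl.
by rewrite coef_poly ltnS.
Qed.

Definition mxu g (u v : R) := (ga g)%:~R * u + (gb g)%:~R * v.
Definition mxv g (u v : R) := (gc g)%:~R * u + (gd g)%:~R * v.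

Lemma act_linpow n g (u v : R) :
  act n g (linpow n u v) = linpow n (mxu g u v) (mxv g u v).
Proof.
have lin_mx : (mxu g u v)%:P - mxv g u v *: 'X =
    u *: (- ((gc g)%:~R *: 'X) + ((ga g)%:~R)%:P) +
    (- v) *: ((gd g)%:~R *: 'X - ((gb g)%:~R)%:P).
  rewrite /mxu /mxv -!mul_polyC !(rmorphD, rmorphM, rmorphN, rmorphB) /=; ring.
rewrite {2}/linpow lin_mx exprDn /act; apply: eq_bigr => i _.
by rewrite coef_linpow -ltnS ltn_ord /mono !exprZn -scalerAl -scalerAr scalerA
  -scalerMnl [_ ^+ i * _]mulrC.
Qed.

Definition linpow2 w1 w2 (u v : R) : {poly {poly R}} :=
  map_poly polyC (linpow w1 u v) * (linpow w2 u v)%:P.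

Lemma coef_linpow2 w1 w2 (u v : R) k1 k2 :
  ((linpow2 w1 w2 u v)`_k1)`_k2 = (linpow w1 u v)`_k1 * (linpow w2 u v)`_k2.
Proof. by rewrite /linpow2 coefMC coef_map /= coefCM. Qed.

Lemma act2_linpow2 w1 w2 g (u v : R) :
  act2_ring w1 w2 g g (linpow2 w1 w2 u v) = linpow2 w1 w2 (mxu g u v) (mxv g u v).
Proof. by rewrite /linpow2 act2_ring_split !act_linpow. Qed.

End Action.

Section Umbral.
Variables (N : nat) (a : nat -> rat).

Definition umbral (y : {poly rat}) : rat := \sum_(i < N) y`_i * a i.

Lemma umbral_is_linear : scalar umbral.
Proof.
move=> c x y; rewrite /umbral mulr_sumr -big_split /=; apply: eq_bigr => i _.
by rewrite coefD coefZ mulrDl mulrA.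
Qed.
HB.instance Definition _ :=
  GRing.isLinear.Build rat {poly rat} rat *%R umbral umbral_is_linear.

Lemma umbralMC y c : umbral (y * c%:P) = umbral y * c.
Proof. by rewrite /umbral mulr_suml; apply: eq_bigr => i _; rewrite coefMC mulrAC. Qed.

Lemma umbralXn m : (m < N)%N -> umbral 'X^m = a m.
Proof.
move=> hm; rewrite /umbral (bigD1 (Ordinal hm)) //= coefXn eqxx mul1r.
rewrite big1 ?addr0 // => i /negbTE; rewrite coefXn.
by rewrite -val_eqE /= => ->; rewrite mul0r.
Qed.

Definition umbral_poly (p : {poly {poly rat}}) : {poly rat} := map_poly umbral p.
HB.instance Definition _ := GRing.Additive.copy umbral_poly (map_poly umbral).

Definition umbral_poly2 (P : {poly {poly {poly rat}}}) : {poly {poly rat}} :=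
  map_poly umbral_poly P.
HB.instance Definition _ := GRing.Additive.copy umbral_poly2 (map_poly umbral_poly).

Lemma coef_umbral_poly2 P k1 k2 :
  ((umbral_poly2 P)`_k1)`_k2 = umbral ((P`_k1)`_k2).
Proof. by rewrite /umbral_poly2 coef_map /= /umbral_poly coef_map. Qed.

Lemma umbral_polyC y : umbral_poly y%:P = (umbral y)%:P.
Proof. exact: map_polyC. Qed.

Lemma umbral_polyMC P (q : {poly rat}) :
  umbral_poly (P * map_poly polyC q) = umbral_poly P * q.
Proof.
apply/polyP => j; rewrite /umbral_poly coef_map !coefM raddf_sum /=.
by apply: eq_bigr => l _; rewrite !coef_map /= umbralMC.
Qed.

Lemma umbral_poly2CM y M :
  umbral_poly2 (y%:P * map_poly (map_poly polyC) M) = (umbral_poly y)%:P * M.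
Proof.
apply/polyP => k; rewrite /umbral_poly2 coef_map !coefCM coef_map /=.
by rewrite umbral_polyMC.
Qed.

Lemma umbral_poly_act w g P : umbral_poly (act w g P) = act w g (umbral_poly P).
Proof.
rewrite /act raddf_sum; apply: eq_bigr => i _.
rewrite /= -(map_mono polyC) -mul_polyC umbral_polyMC umbral_polyC mul_polyC.
by rewrite /umbral_poly coef_map.
Qed.

Lemma umbral_poly2_act2 w1 w2 g1 g2 P :
  umbral_poly2 (act2_ring w1 w2 g1 g2 P) = act2 w1 w2 g1 g2 (umbral_poly2 P).
Proof.
rewrite /act2_ring /act2 raddf_sum; apply: eq_bigr => i _.
rewrite /= -(map_mono (map_poly polyC)) -mul_polyC umbral_poly2CM mul_polyC.
by rewrite umbral_poly_act /umbral_poly2 coef_map.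
Qed.

Lemma umbral_poly_diag P : (umbral_poly2 P).['X] = umbral_poly P.['X].
Proof.
have hs : (size (umbral_poly2 P) <= size P)%N.
  by apply/leq_sizeP => j hj; rewrite /umbral_poly2 coef_map nth_default // raddf0.
rewrite (horner_coef_wide _ hs) (horner_coef_wide _ (leqnn (size P))) raddf_sum.
apply: eq_bigr => i _.
by rewrite /= -(map_polyXn polyC i) umbral_polyMC /umbral_poly2 coef_map.
Qed.

End Umbral.

Section Transfer.
Variables (w1 w2 : nat) (a : nat -> rat).
Local Notation w := (w1 + w2)%N.
Local Notation L := (umbral_poly w.+1 a).
Local Notation L2 := (umbral_poly2 w.+1 a).
Local Notation Y := ('X : {poly rat}).

Definition binom_ratio k1 k2 : rat :=
  if (k1 <= w1)%N && (k2 <= w2)%N then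
    ('C(w1, k1) * 'C(w2, k2))%:R / ('C(w, k1 + k2))%:R else 0.

Lemma coef_linpow2_ratio (u v : {poly rat}) k1 k2 :
  ((linpow2 w1 w2 u v)`_k1)`_k2 = binom_ratio k1 k2 *: (linpow w u v)`_(k1 + k2).
Proof.
rewrite coef_linpow2 !coef_linpow /binom_ratio.
case: (leqP k1 w1) => h1; last by rewrite mul0r andFb scale0r.
case: (leqP k2 w2) => h2; last by rewrite mulr0 andbF scale0r.
rewrite leq_add //= -!scaler_nat scalerA mulfVK; last first.
  by rewrite pnatr_eq0 -lt0n bin_gt0 leq_add.
rewrite -scalerAl -scalerAr scalerA natrM; congr (_ *: _).
have -> : (w - (k1 + k2) = (w1 - k1) + (w2 - k2))%N by lia.
rewrite !exprD; ring.
Qed.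

Lemma umbral_poly2_eq0 (F : {poly {poly rat}}) (G : {poly {poly {poly rat}}}) :
  (forall k1 k2, (G`_k1)`_k2 = binom_ratio k1 k2 *: F`_(k1 + k2)) ->
  L F = 0 -> L2 G = 0.
Proof.
move=> hG hF; apply/polyP => k1; apply/polyP => k2.
rewrite coef_umbral_poly2 hG linearZ /= !coef0.
have := congr1 (fun p : {poly rat} => p`_(k1 + k2)) hF.
by rewrite /= /umbral_poly coef_map coef0 => ->; rewrite mulr0.
Qed.

Lemma inV2_umbral_linpow2 (u v : {poly rat}) : inV2 w1 w2 (L2 (linpow2 w1 w2 u v)).
Proof.
apply/andP; split.
  apply/leq_sizeP => j hj; apply/polyP => k.
  by rewrite coef0 coef_umbral_poly2 coef_linpow2 coef_linpow leqNgt hj mul0r raddf0.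
apply/forallP => i; apply/leq_sizeP => j hj.
by rewrite coef_umbral_poly2 coef_linpow2 [X in _ * X]coef_linpow leqNgt hj mulr0 raddf0.
Qed.

Lemma umbral_linpow2_inVID p : L (linpow w Y 1) = p -> inW w p ->
  inVID w1 w2 (L2 (linpow2 w1 w2 Y 1)) /\ diag (L2 (linpow2 w1 w2 Y 1)) = p.
Proof.
move=> Lp [_ [hS hU]]; split.
  split; first exact: inV2_umbral_linpow2.
  split.
    rewrite -umbral_poly2_act2 act2_linpow2 -raddfD.
    apply: (umbral_poly2_eq0 (F := linpow w Y 1 + linpow w (mxu mS Y 1) (mxv mS Y 1))).
      by move=> k1 k2; rewrite !coefD !coef_linpow2_ratio scalerDr.
    by rewrite -act_linpow raddfD /= umbral_poly_act Lp.
  rewrite -!umbral_poly2_act2 !act2_linpow2 -!raddfD.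
  apply: (umbral_poly2_eq0 (F := linpow w Y 1 + linpow w (mxu mU Y 1) (mxv mU Y 1)
                            + linpow w (mxu mU2 Y 1) (mxv mU2 Y 1))).
    by move=> k1 k2; rewrite !coefD !coef_linpow2_ratio !scalerDr.
  by rewrite -!act_linpow !raddfD /= !umbral_poly_act Lp.
rewrite /diag umbral_poly_diag /linpow2 hornerM horner_polyC_X hornerC.
by rewrite -exprD -Lp.
Qed.

Lemma linpow_YX n : linpow n Y 1 = \sum_(m < n.+1)
    (map_poly polyC ((- 'X : {poly rat}) ^+ (n - m)) * (Y ^+ m)%:P) *+ 'C(n, m).
Proof.
rewrite /linpow scale1r addrC exprDn; apply: eq_bigr => m _.
by rewrite rmorphXn rmorphN /= map_polyX rmorphXn.
Qed.

Lemma umbral_linpow :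
  L (linpow w Y 1) = \sum_(m < w.+1) ('C(w, m)%:R * a m) *: (- 'X) ^+ (w - m).
Proof.
rewrite linpow_YX raddf_sum; apply: eq_bigr => m _.
rewrite raddfMn /= mulrC umbral_polyMC umbral_polyC umbralXn //.
by rewrite mul_polyC scalerMnl -mulr_natl.
Qed.

Lemma section_umbral : section w1 w2 a = L2 (linpow2 w1 w2 Y 1).
Proof.
rewrite /linpow2 !linpow_YX !rmorph_sum mulr_suml raddf_sum.
apply: eq_bigr => m1 _; rewrite mulr_sumr raddf_sum; apply: eq_bigr => m2 _ /=.
set M := (- 'X : {poly {poly rat}}) ^+ (w1 - m1) * ((- 'X : {poly rat}) ^+ (w2 - m2))%:P.
have -> : map_poly polyC
      ((map_poly polyC ((- 'X : {poly rat}) ^+ (w1 - m1)) * (Y ^+ m1)%:P) *+ 'C(w1, m1)) *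
    ((map_poly polyC ((- 'X : {poly rat}) ^+ (w2 - m2)) * (Y ^+ m2)%:P) *+ 'C(w2, m2))%:P
    = ((Y ^+ (m1 + m2)) *+ ('C(w1, m1) * 'C(w2, m2)))%:P%:P *
      map_poly (map_poly polyC) M.
  rewrite /M.
  do 8! rewrite ?rmorphMn ?rmorphM ?rmorphXn ?rmorphN ?rmorphD ?map_polyX ?map_polyC /=.
  rewrite exprD mulrnA; ring.
rewrite umbral_poly2CM /= umbral_polyC raddfMn /= umbralXn ?mulr_natl //.
by have := ltn_ord m1; have := ltn_ord m2; lia.
Qed.

End Transfer.

Section Moments.
Variables (w : nat) (p : {poly rat}).

(* Inverts the binomial expansion p = \sum_m C(w,m) a_m (-X)^(w-m). *)
Definition moments (m : nat) : rat :=
  p`_(w - m) * (-1) ^+ (w - m) / ('C(w, w - m))%:R.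

Lemma umbral_linpow_moments :
  (size p <= w.+1)%N -> umbral_poly w.+1 moments (linpow w 'X 1) = p.
Proof.
move=> hs; apply/polyP => k; rewrite /umbral_poly coef_map /= coef_linpow.
case: leqP => hk; last first.
  rewrite /umbral big1 => [|i _]; last by rewrite coef0 mul0r.
  by rewrite nth_default // (leq_trans hs hk).
have sgn : (-1 : {poly rat}) ^+ k = ((-1 : rat) ^+ k)%:P by rewrite rmorphXn rmorphN1.
rewrite raddfMn /= sgn umbralMC umbralXn ?ltnS ?leq_subr // /moments subKn //.
have hC : ('C(w, k)%:R : rat) != 0 by rewrite pnatr_eq0 -lt0n bin_gt0.
have sgn2 : (-1) ^+ k * (-1) ^+ k = 1 :> rat by rewrite -exprMn mulrNN mulr1 expr1n.
by rewrite mulrAC -(mulrA (p`_k)) sgn2 mulr1 -[LHS]mulr_natr divfK.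
Qed.

End Moments.

Lemma size_sum_leq (R : nzSemiRingType) (I : finType) (F : I -> {poly R}) n :
  (forall i, (size (F i) <= n)%N) -> (size (\sum_i F i)%R <= n)%N.
Proof.
move=> hF; apply: (big_ind (fun q : {poly R} => size q <= n)%N) => //.
  by rewrite size_poly0.
by move=> x y hx hy; apply: leq_trans (size_polyD x y) _; rewrite geq_max hx hy.
Qed.

Section Diagonal.
Variables (w1 w2 : nat).
Local Notation w := (w1 + w2)%N.

Lemma poly_sum_coef (p : {poly rat}) n :
  (size p <= n)%N -> p = \sum_(j < n) p`_j *: 'X^j.
Proof.
move=> h; rewrite -poly_def; apply/polyP => j; rewrite coef_poly.
by case: ltnP => // hj; rewrite nth_default // (leq_trans h hj).
Qed.

Lemma diag_sum P : inV2 w1 w2 P ->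
  diag P = \sum_(i < w1.+1) \sum_(j < w2.+1) (P`_i)`_j *: 'X^(j + i).
Proof.
case/andP => hP /forallP hPi.
rewrite /diag (horner_coef_wide _ hP); apply: eq_bigr => i _.
rewrite {1}(poly_sum_coef (hPi i)) mulr_suml; apply: eq_bigr => j _.
by rewrite -scalerAl exprD.
Qed.

Lemma inV_diag P : inV2 w1 w2 P -> inV w (diag P).
Proof.
move=> hV; rewrite /inV (diag_sum hV); apply: size_sum_leq => i.
apply: size_sum_leq => j; apply: leq_trans (size_scale_leq _ _) _.
by rewrite size_polyXn; have := ltn_ord i; have := ltn_ord j; lia.
Qed.

Lemma mono_add g i j : (i <= w1)%N -> (j <= w2)%N ->
  mono g w (j + i) = mono g w2 j * mono g w1 i :> {poly rat}.
Proof.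
move=> hi hj; rewrite /mono.
have -> : (w - (j + i) = (w2 - j) + (w1 - i))%N by lia.
rewrite !exprD; ring.
Qed.

Lemma diag_act2 g P : inV2 w1 w2 P -> diag (act2 w1 w2 g g P) = act w g (diag P).
Proof.
move=> hV; rewrite (diag_sum hV); case/andP: hV => hP /forallP hPi.
rewrite /diag /act2 horner_sum linear_sum; apply: eq_bigr => i _ /=.
rewrite hornerZ -[X in X.['X]](map_mono polyC) horner_polyC_X.
rewrite {1}(poly_sum_coef (hPi i)) !linear_sum mulr_suml /=.
apply: eq_bigr => j _; have hi := ltn_ord i; have hj := ltn_ord j.
by rewrite !linearZ /= !act_Xn ?mono_add -?scalerAl //; lia.
Qed.

Lemma inW_diag P : inVID w1 w2 P -> inW w (diag P).
Proof.
move=> [hV [hS hU]]; split; first exact: inV_diag.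
split; first by rewrite -diag_act2 // /diag -hornerD hS horner0.
by rewrite -!diag_act2 // /diag -!hornerD hU horner0.
Qed.

End Diagonal.

Theorem mainTheorem7 (w1 w2 : nat) (hw1 : (2 <= w1)%N) (hw2 : (2 <= w2)%N)
    (e1 : ~~ odd w1) (e2 : ~~ odd w2) :
  (forall P : {poly {poly rat}}, inVID w1 w2 P -> inW (w1 + w2) (diag P)) /\
  (forall p : {poly rat}, inW (w1 + w2) p ->
     exists P : {poly {poly rat}}, inVID w1 w2 P /\ diag P = p) /\
  (forall (p : {poly rat}) (a : nat -> rat), inW (w1 + w2) p ->
     p = \sum_(m < (w1 + w2).+1)
           ('C(w1 + w2, m)%:R * a m) *: (- 'X) ^+ (w1 + w2 - m) ->
     inVID w1 w2 (section w1 w2 a) /\ diag (section w1 w2 a) = p).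
Proof.
have section_ok (p : {poly rat}) (a : nat -> rat) : inW (w1 + w2) p ->
    p = \sum_(m < (w1 + w2).+1) ('C(w1 + w2, m)%:R * a m) *: (- 'X) ^+ (w1 + w2 - m) ->
    inVID w1 w2 (section w1 w2 a) /\ diag (section w1 w2 a) = p.
  move=> hp hpa; rewrite section_umbral.
  by apply: umbral_linpow2_inVID => //; rewrite umbral_linpow hpa.
split; first exact: inW_diag.
split; last exact: section_ok.
move=> p hp; exists (section w1 w2 (moments (w1 + w2) p)).
apply: section_ok => //.
have [hsize _] := hp.
by rewrite -(umbral_linpow w1 w2) umbral_linpow_moments.
Qed.
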